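(* Let $\circ$ be an alternative operation on $V=\mathbb{F}_2^s$ such that $\dim W_\circ=s-3$. Then $\dim U_\circ\in\{2,3\}$.
   Context: An alternative operation on $V$ is defined from an elementary abelian $2$-subgroup $T<\mathrm{AGL}(V,+)$ acting regularly on $V$: with $\tau_a$ the unique element of $T$ sending $0$ to $a$ (postfix notation), $a\circ b:=a\tau_b$. It is assumed that the xor-translations $x\mapsto x+a$ lie in the normaliser of $T$ in $\mathrm{Sym}(V)$. The weak key space is $W_\circ=\{k: x\circ k=x+k\ \forall x\in V\}$; the product is $a\cdot b:=a+b+a\circ b$ and the error space is $U_\circ=\{a\cdot b: a,b\in V\}$. *)

From HB Require Import structures.
From mathcomp Require Import all_boot all_order all_algebra all_fingroup all_field.
Set Implicit Arguments. Unset Strict Implicit. Unset Printing Implicit Defensive.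
Import GRing.Theory.
Local Open Scope ring_scope.

Notation V s := 'rV['F_2]_s.

Definition transl_fun s (a : V s) (x : V s) : V s := x + a.
Lemma transl_inj s (a : V s) : injective (transl_fun a).
Proof. by move=> x y; rewrite /transl_fun => /addIr. Qed.
Definition transl s (a : V s) : {perm V s} := perm (@transl_inj s a).

Definition is_affine s (t : {perm V s}) : Prop :=
  exists (A : 'M['F_2]_s) (b : V s), A \in unitmx /\ forall x, t x = x *m A + b.

Definition translation_group s (T : {group {perm V s}}) : Prop :=
  [/\ (forall t, t \in T -> is_affine t),
      abelian T,
      (forall t, t \in T -> t ^+ 2 = 1)%g,
      (forall x y : V s, exists! t, t \in T /\ t x = y) &
      (forall a : V s, transl a \in 'N(T)%g)].

Definition tau s (T : {group {perm V s}}) (a : V s) : {perm V s} :=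
  odflt 1%g [pick t in T | t 0 == a].

(* a o b := a tau_b (postfix notation: tau_b applied to a) *)
Definition circ s (T : {group {perm V s}}) (a b : V s) : V s := tau T b a.

Definition Wcirc s (T : {group {perm V s}}) : {set V s} :=
  [set k | [forall x, circ T x k == x + k]].

Definition dotc s (T : {group {perm V s}}) (a b : V s) : V s := a + b + circ T a b.

Definition Ucirc s (T : {group {perm V s}}) : {set V s} :=
  [set dotc T ab.1 ab.2 | ab in [set: V s * V s]].

Definition dimset s (A : {set V s}) : nat := \dim <<enum A>>%VS.

From HB Require Import structures.
From mathcomp Require Import all_boot all_order all_algebra all_fingroup all_field.
Import GRing.Theory.
Local Open Scope ring_scope.

(* The product [a . b = a + b + a o b] is an alternating bilinear map on V
   whose radical [{k | forall x, x . k = 0}] is W; this only uses that T is an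
   abelian group of affine involutions acting regularly.  Write V = W + C with
   C spanned by e1, e2, e3.  Then U is spanned by e1.e2, e1.e3, e2.e3, so
   dim U <= 3.  If U were contained in a line <u>, say e1.e2 = al u,
   e1.e3 = be u, e2.e3 = ga u, then ga e1 - be e2 + al e3 would lie in C and in
   the radical, hence vanish; so al = be = ga = 0 and e1 would lie in the
   radical too, a contradiction.  (This is the parity of the rank of an
   alternating form: the codimension 3 of the radical is odd.) *)

Section VectorFacts.
Variables (K : fieldType) (vT : vectType K).

Lemma vline_vpick (U : {vspace vT}) : (\dim U <= 1)%N -> U = <[vpick U]>%VS.
Proof.
have [-> _|nzU dimU] := eqVneq U 0%VS.
  by apply/eqP; rewrite eq_sym -dimv_eq0 dim_vline vpick0 eqxx.
by apply/eqP; rewrite eq_sym eqEdim -memvE memv_pick dim_vline vpick0 nzU.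
Qed.

Lemma free3_lincomb_eq0 (e1 e2 e3 : vT) a b c : free [:: e1; e2; e3] ->
  a *: e1 + b *: e2 + c *: e3 = 0 -> [/\ a = 0, b = 0 & c = 0].
Proof.
move=> /(freeP (X := [tuple e1; e2; e3])) freeE abc0.
have /freeE coef0 : \sum_(i < 3) [:: a; b; c]`_i *: [tuple e1; e2; e3]`_i = 0.
  by rewrite !big_ord_recl big_ord0 /= addr0 addrA abc0.
by split; [apply: (coef0 0) | apply: (coef0 1) | apply: (coef0 2)].
Qed.
End VectorFacts.

Section BilinearSpan.
Variables (K : fieldType) (uT vT wT : vectType K) (p : {bilinear uT -> vT -> wT}).

Lemma bilinear_span_subv (X : seq uT) (Y : seq vT) (S : {vspace wT}) :
    (forall x y, x \in X -> y \in Y -> p x y \in S) ->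
  forall x y, x \in <<X>>%VS -> y \in <<Y>>%VS -> p x y \in S.
Proof.
move=> pXY x y /(coord_span (X := in_tuple X))-> /(coord_span (X := in_tuple Y))->.
rewrite linear_sumlz; apply: memv_suml => i _; rewrite linearZl_LR.
rewrite linear_sumr; apply: memvZ; apply: memv_suml => j _; rewrite linearZ.
by apply/memvZ/pXY; apply: mem_nth.
Qed.
End BilinearSpan.

Section AlternatingCodim3.
Variables (K : fieldType) (vT wT : vectType K) (p : {bilinear vT -> vT -> wT}).
Hypothesis p_alt : forall a, p a a = 0.

Lemma alternating_antisym a b : p b a = - p a b.
Proof.
have := p_alt (a + b); rewrite linearDl !linearDr !p_alt add0r addr0 => /eqP.
by rewrite addr_eq0 => /eqP->; rewrite opprK.
Qed.

Variable W : {vspace vT}.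
Hypothesis memW_radical : forall k, k \in W <-> forall x, p x k = 0.

Lemma radicalWl w x : w \in W -> p w x = 0.
Proof.
move=> /memW_radical/(_ x); rewrite alternating_antisym => /eqP.
by rewrite oppr_eq0 => /eqP.
Qed.

Section ComplementBasis.
Context {e1 e2 e3 : vT}.
Hypothesis basisE : basis_of W^C%VS [:: e1; e2; e3].
Local Notation E := [:: e1; e2; e3].

Lemma span_basisE : <<E>>%VS = W^C%VS.
Proof. by case/andP: basisE => /eqP. Qed.

Lemma radical_complement_decomp x :
  exists w c, [/\ w \in W, c \in <<E>>%VS & x = w + c].
Proof.
have /memv_addP[w wW [c cE ->]] : x \in (W + W^C)%VS by rewrite addv_complf memvf.
by exists w, c; rewrite span_basisE.
Qed.

Lemma p_complement_repr x y :
  exists c c', [/\ c \in <<E>>%VS, c' \in <<E>>%VS & p x y = p c c'].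
Proof.
have [w [c [wW cE ->]]] := radical_complement_decomp x.
have [w' [c' [wW' cE' ->]]] := radical_complement_decomp y.
exists c, c'; split=> //.
by rewrite linearDl radicalWl // add0r linearDr (proj1 (memW_radical _) wW') add0r.
Qed.

Lemma complement_radical_eq0 y : y \in <<E>>%VS ->
  p e1 y = 0 -> p e2 y = 0 -> p e3 y = 0 -> y = 0.
Proof.
move=> yE p1 p2 p3; apply/eqP.
rewrite -memv0 -(capv_compl W) memv_cap -span_basisE yE andbT.
apply/memW_radical => x; have [w [c [wW cE ->]]] := radical_complement_decomp x.
rewrite linearDl radicalWl // add0r; apply/eqP; rewrite -memv0.
apply: (@bilinear_span_subv _ _ _ _ _ E [:: y]) cE (memv_span1 y) => x' y'.
by rewrite !inE => /or3P[]/eqP-> /eqP->; rewrite ?p1 ?p2 ?p3 mem0v.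
Qed.

Lemma alternating_image_span a b : p a b \in <<[:: p e1 e2; p e1 e3; p e2 e3]>>%VS.
Proof.
have [c [c' [cE cE' ->]]] := p_complement_repr a b.
have inS z : z \in [:: p e1 e2; p e1 e3; p e2 e3] ->
    z \in <<[:: p e1 e2; p e1 e3; p e2 e3]>>%VS by exact: memv_span.
set S := <<_>>%VS in inS *.
apply: bilinear_span_subv cE cE' => x y.
rewrite !inE => /or3P[]/eqP-> /or3P[]/eqP->;
  rewrite ?p_alt ?mem0v ?(alternating_antisym e1 e2) ?(alternating_antisym e1 e3)
  ?(alternating_antisym e2 e3) ?memvN //;
  by apply: inS; rewrite !inE eqxx ?orbT.
Qed.

Lemma alternating_image_not_in_line u : ~ (forall a b, p a b \in <[u]>%VS).
Proof.
move=> inu.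
have [al p12] := vlineP _ _ (inu e1 e2).
have [be p13] := vlineP _ _ (inu e1 e3).
have [ga p23] := vlineP _ _ (inu e2 e3).
have memE x : x \in E -> x \in <<E>>%VS by exact: memv_span.
pose y := ga *: e1 + (- be) *: e2 + al *: e3.
have yE : y \in <<E>>%VS by rewrite !memvD ?memvZ ?memE // !inE eqxx ?orbT.
have /free3_lincomb_eq0 : y = 0.
  apply: complement_radical_eq0 => //;
    rewrite !linearDr !linearZr_LR p_alt scaler0 ?(add0r, addr0)
    ?(alternating_antisym e1 e2) ?(alternating_antisym e1 e3)
    ?(alternating_antisym e2 e3) ?p12 ?p13 ?p23 ?scalerN !scalerA -?scaleNr -scalerDl;
  by rewrite ?mulNr ?opprK mulrC addNr scale0r.
have freeE := basis_free basisE.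
case/(_ freeE) => ga0 /eqP; rewrite oppr_eq0 => /eqP be0 al0.
have /eqP := free_not0 freeE (mem_head e1 [:: e2; e3]); apply.
apply: complement_radical_eq0; rewrite ?memE ?mem_head ?p_alt //.
  by rewrite alternating_antisym p12 al0 scale0r oppr0.
by rewrite alternating_antisym p13 be0 scale0r oppr0.
Qed.
End ComplementBasis.

Hypothesis codimW : (\dim {:vT} - \dim W)%N = 3.

Lemma complement_basis3 : exists e1 e2 e3, basis_of W^C%VS [:: e1; e2; e3].
Proof.
have := vbasisP W^C%VS; have := size_tuple (vbasis W^C%VS).
case: (vbasis _) => X _ /=; rewrite dimv_compl codimW.
case: X => [|e1 [|e2 [|e3 []]]] //= _ basisE.
by exists e1, e2, e3.
Qed.

Theorem dim_alternating_image_span (U : {vspace wT}) :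
    (forall a b, p a b \in U) ->
    (forall U' : {vspace wT}, (forall a b, p a b \in U') -> (U <= U')%VS) ->
  \dim U \in [:: 2%N; 3%N].
Proof.
move=> pU minU; have [e1 [e2 [e3 basisE]]] := complement_basis3.
have le3 : (\dim U <= 3)%N.
  apply: leq_trans (dim_span [:: p e1 e2; p e1 e3; p e2 e3]).
  exact/dimvS/minU/alternating_image_span.
have gt1 : (1 < \dim U)%N.
  rewrite ltnNge; apply/negP => /vline_vpick Uline.
  by apply: (alternating_image_not_in_line basisE (vpick U)) => a b; rewrite -Uline.
by move: gt1 le3; case: (\dim U) => [|[|[|[|]]]].
Qed.
End AlternatingCodim3.

Lemma addrr_F2 (M : lmodType 'F_2) (v : M) : v + v = 0.
Proof. by rewrite -[v]scale1r -scalerDl (addrr_pchar2 (pchar_Fp (isT : prime 2))) scale0r. Qed.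

Lemma oppr_F2 (M : lmodType 'F_2) (v : M) : - v = v.
Proof. by apply/eqP; rewrite eq_sym -subr_eq0 opprK addrr_F2. Qed.

Section TranslationGroup.
Context {s : nat} {T : {group {perm 'rV['F_2]_s}}}.
Hypothesis TG : translation_group T.

Lemma tau_spec b : tau T b \in T /\ tau T b 0 = b.
Proof.
case: TG => _ _ _ regT _; rewrite /tau; case: pickP => [t /andP[tT /eqP] //|noT].
by have [t [[tT t0] _]] := regT 0 b; move: (noT t); rewrite tT t0 eqxx.
Qed.

Lemma circC a b : circ T a b = circ T b a.
Proof.
case: TG => _ abT _ _ _; have [taT ta0] := tau_spec a; have [tbT tb0] := tau_spec b.
have -> : circ T a b = (tau T a * tau T b)%g 0 by rewrite permM ta0.
have -> : circ T b a = (tau T b * tau T a)%g 0 by rewrite permM tb0.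
by rewrite (centsP abT _ taT _ tbT).
Qed.

Lemma circxx a : circ T a a = 0.
Proof.
case: TG => _ _ invT _ _; have [taT ta0] := tau_spec a.
have -> : circ T a a = (tau T a * tau T a)%g 0 by rewrite permM ta0.
by rewrite -expg2 invT // perm1.
Qed.

Lemma dotcC a b : dotc T a b = dotc T b a.
Proof. by rewrite /dotc circC (addrC a). Qed.

Lemma dotcxx a : dotc T a a = 0.
Proof. by rewrite /dotc circxx addrr_F2 addr0. Qed.

Lemma dotc_linearl b : linear (dotc T ^~ b).
Proof.
case: TG => affT _ _ _ _; have [tbT tb0] := tau_spec b.
have [A [c [_ tbE]]] := affT _ tbT.
have dotcE x : dotc T x b = x *m (1%:M + A).
  (* tau_b 0 = b forces the translation part of tau_b to be b *)
  rewrite /dotc /circ tbE -[c]add0r -(mul0mx _ A) -tbE tb0.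
  by rewrite mulmxDr mulmx1 addrACA addrr_F2 addr0.
by move=> k x y; rewrite !dotcE mulmxDl scalemxAl.
Qed.

Lemma dotc_linearr a : linear (dotc T a).
Proof. by move=> k x y; rewrite !(dotcC a) dotc_linearl. Qed.

Definition dotc_bilinear : {bilinear 'rV['F_2]_s -> 'rV['F_2]_s -> 'rV['F_2]_s} :=
  HB.pack (dotc T)
    (bilinear_isBilinear.Build _ _ _ _ _ _ (dotc T) (dotc_linearl, dotc_linearr)).

Lemma dotc_eq0 x k : (dotc T x k == 0) = (circ T x k == x + k).
Proof. by rewrite /dotc addrC addr_eq0 oppr_F2. Qed.

Lemma memv_Wcirc k : k \in <<enum (Wcirc T)>>%VS <-> forall x, dotc T x k = 0.
Proof.
split=> [kW x|k0]; last first.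
  by apply: memv_span; rewrite mem_enum inE; apply/forallP => x; rewrite -dotc_eq0 k0.
apply/eqP; rewrite -memv0.
apply: (@bilinear_span_subv _ _ _ _ dotc_bilinear [:: x] (enum (Wcirc T))) (memv_span1 x) kW.
move=> _ w /[!inE] /eqP->; rewrite mem_enum inE => /forallP/(_ x).
by rewrite -dotc_eq0 memv0.
Qed.

End TranslationGroup.

Theorem proposition5 (s : nat) (T : {group {perm 'rV['F_2]_s}}) :
  translation_group T -> (3 <= s)%N ->
  dimset (Wcirc T) = (s - 3)%N ->
  dimset (Ucirc T) \in [:: 2%N; 3%N].
Proof.
move=> TG s_ge3 dimW.
have codimW : (\dim {:'rV['F_2]_s} - \dim <<enum (Wcirc T)>>)%N = 3.
  rewrite dimvf dim_matrix mul1r.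
  by move: dimW; rewrite /dimset => ->; rewrite subKn.
have memU a b : dotc T a b \in enum (Ucirc T).
  by rewrite mem_enum; apply/imsetP; exists (a, b).
apply: (@dim_alternating_image_span _ _ _ (dotc_bilinear TG) (dotcxx TG) _
          (memv_Wcirc TG) codimW).
  by move=> a b; apply/memv_span/memU.
move=> U' pU'; apply/span_subvP => u.
by rewrite mem_enum => /imsetP[[a b] _ ->]; apply: pU'.
Qed.
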